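(* Let $G = (\mathbb{Z}/2\mathbb{Z})^n$, $N = 2^n$, let $\epsilon \in (0,\tfrac12)$ and let $A \subseteq G$. Then there is a subgroup $H \leq G$ of index $|G/H| \leq W(\epsilon^{-3})$ which is $\epsilon$-regular for $A$.
   Context: For a subgroup $H \leq G$ and $g \in G$, let $A_H^{+g} \subseteq H$ be the set $\{x \in H : x + g \in A\}$. An element $g \in G$ is an $\epsilon$-regular value (with respect to $A$ and $H$) if for every nontrivial character $\chi$ of $H$ one has $\left|\sum_{x \in H} A_H^{+g}(x)\chi(x)\right| \leq \epsilon|H|$ (here $A_H^{+g}$ also denotes its indicator function on $H$). $H$ is $\epsilon$-regular for $A$ if the number of $g \in G$ which are not $\epsilon$-regular values is at most $\epsilon N$. $W(t)$ denotes a tower of twos of height $\lceil t\rceil$ ($W(t) = w_{\lceil t \rceil}$ with $w_0 = 1$, $w_{h+1} = 2^{w_h}$). *)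

From HB Require Import structures.
From mathcomp Require Import all_boot all_order all_algebra.
From mathcomp Require Import boolp reals complex.
Set Implicit Arguments. Unset Strict Implicit. Unset Printing Implicit Defensive.
Import Order.TTheory GRing.Theory Num.Theory.
Local Open Scope ring_scope.
Local Open Scope complex_scope.

Notation G2 n := 'rV['F_2]_n.

Definition is_subgroup n (H : {set G2 n}) : Prop :=
  0 \in H /\ (forall x y, x \in H -> y \in H -> x + y \in H).

Definition cosets n (H : {set G2 n}) : {set {set G2 n}} :=
  [set [set g + h | h in H] | g : G2 n].
Definition quot_card n (H : {set G2 n}) : nat := #|cosets H|.

(* A character of H: a homomorphism from H to the multiplicative group C^*,
   C = R[i] the complex numbers over the reals R (values outside H irrelevant). *)
Definition is_character (R : realType) n (H : {set G2 n}) (chi : G2 n -> R[i]) : Prop :=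
  (forall x, x \in H -> chi x != 0) /\
  (forall x y, x \in H -> y \in H -> chi (x + y) = chi x * chi y).
Definition nontrivial_on (R : realType) n (H : {set G2 n}) (chi : G2 n -> R[i]) : Prop :=
  exists2 x, x \in H & chi x != 1.

(* Indicator of A_H^{+g} on H: x |-> [x + g \in A]. *)
Definition shifted_ind (R : realType) n (A : {set G2 n}) (g x : G2 n) : R[i] :=
  (x + g \in A)%:R.

Definition regular_value (R : realType) n (eps : R) (A H : {set G2 n}) (g : G2 n) : Prop :=
  forall chi : G2 n -> R[i], is_character H chi -> nontrivial_on H chi ->
    `| \sum_(x in H) shifted_ind R A g x * chi x | <= (eps * #|H|%:R)%:C.

Definition regular_subgroup (R : realType) n (eps : R) (A H : {set G2 n}) : Prop :=
  (#|[set g : G2 n | ~~ `[< regular_value eps A H g >]]|%:R <= eps * (2 ^ n)%:R).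

Fixpoint tower (h : nat) : nat := if h is h'.+1 then 2 ^ tower h' else 1.
Definition W (R : realType) (t : R) : nat := tower `|Num.ceil t|%N.

From HB Require Import structures.
From mathcomp Require Import all_boot all_order all_algebra.
From mathcomp Require Import boolp reals complex.
From mathcomp Require Import ring lra zify.
Import Order.TTheory GRing.Theory Num.Theory.
Local Open Scope ring_scope.

Set Implicit Arguments. Unset Strict Implicit. Unset Printing Implicit Defensive.

(* For a subgroup H write d_H(x) for the density of A on the
   coset x + H and E(H) = sum_x d_H(x)^2 <= N.  If H is not eps-regular, every
   irregular coset carries a character of H, necessarily +-1-valued, with a large
   Fourier coefficient.  Intersecting H with the kernels of one such character per
   coset yields K <= H with |G/K| <= |G/H| 2^|G/H|, and Cauchy-Schwarz on each
   irregular coset shows E(K) > E(H) + eps^3 N.  Since E <= N, at most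
   ceil(eps^-3) refinements occur, and the index then stays below a tower of
   twos of that height. *)

Section Exponent2.

Variable n : nat.
Local Notation V := 'rV['F_2]_n.
Implicit Types (x y g : V) (H K : {set V}).

Lemma addvv x : x + x = 0.
Proof. by apply/matrixP => i j; rewrite !mxE addrr_pchar2 // pchar_Fp. Qed.

Lemma addvK y : involutive (+%R^~ y).
Proof. by move=> x; rewrite /= -addrA addvv addr0. Qed.

Lemma card_rowF2 : #|{: V}| = (2 ^ n)%N.
Proof. by rewrite card_mx card_Fp // mul1n. Qed.

Lemma subgroup_setT : is_subgroup [set: V].
Proof. by split=> [|x y]; rewrite !inE. Qed.

Lemma subgroup_addr_in H x y :
  is_subgroup H -> y \in H -> (x + y \in H) = (x \in H).
Proof.
case=> _ addH yH; apply/idP/idP => [xyH|xH]; last exact: addH.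
by rewrite -(addvK y x); apply: addH.
Qed.

Lemma subgroup_sum_addr (T : nmodType) H (F : V -> T) y :
  is_subgroup H -> y \in H -> \sum_(x in H) F (x + y) = \sum_(x in H) F x.
Proof.
move=> sH yH; rewrite [RHS](reindex_inj (addIr y)) /=.
by apply: eq_bigl => x; rewrite subgroup_addr_in.
Qed.

Lemma card_subgroup_gt0 H : is_subgroup H -> (0 < #|H|)%N.
Proof. by case=> H0 _; apply/card_gt0P; exists 0. Qed.

Definition coset H g : {set V} := [set g + h | h in H].

Lemma mem_coset H g y : (y \in coset H g) = (y + g \in H).
Proof.
apply/imsetP/idP => [[h hH ->]|ygH]; first by rewrite addrAC addvv add0r.
by exists (y + g); rewrite // addrC addvK.
Qed.

Lemma coset_id H g : is_subgroup H -> g \in coset H g.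
Proof. by case=> H0 _; rewrite mem_coset addvv. Qed.

Lemma coset_eq H g y : is_subgroup H -> y \in coset H g -> coset H y = coset H g.
Proof.
move=> sH; rewrite mem_coset => ygH; apply/setP => z; rewrite !mem_coset.
by rewrite -(subgroup_addr_in (z + y) sH ygH) addrA addvK.
Qed.

Lemma quot_card_mul H : is_subgroup H -> (quot_card H * #|H| = 2 ^ n)%N.
Proof.
move=> sH.
have trivI : trivIset (cosets H).
  apply/trivIsetP => _ _ /imsetP[a _ ->] /imsetP[b _ ->].
  rewrite -/(coset H a) -/(coset H b) -setI_eq0.
  apply: contraR => /set0Pn[x /setIP[xa xb]].
  by rewrite -(coset_eq sH xa) (coset_eq sH xb).
have coverT : cover (cosets H) = [set: V].
  apply/setP => x; rewrite inE; apply/bigcupP.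
  by exists (coset H x); [apply: imset_f | apply: coset_id].
move/eqP: trivI; rewrite coverT cardsT card_rowF2 => <-.
rewrite /quot_card -sum_nat_const; apply: eq_bigr => _ /imsetP[g _ ->].
by rewrite card_imset //; apply: addrI.
Qed.

Lemma quot_card_le H K m : is_subgroup H -> is_subgroup K ->
  (#|H| <= m * #|K|)%N -> (quot_card K <= quot_card H * m)%N.
Proof.
move=> sH sK le_HK.
rewrite -(leq_pmul2r (card_subgroup_gt0 sK)) quot_card_mul // -(quot_card_mul sH).
by rewrite -mulnA leq_mul2l le_HK orbT.
Qed.

End Exponent2.

Lemma sum_mul_sqr_le (F : realFieldType) (I : finType) (P : pred I) (f g : I -> F) :
  (\sum_(i | P i) f i * g i) ^+ 2 <=
  (\sum_(i | P i) f i ^+ 2) * \sum_(i | P i) g i ^+ 2.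
Proof.
set a := \sum_(i | P i) f i * g i; set ff := \sum_(i | P i) f i ^+ 2.
set gg := \sum_(i | P i) g i ^+ 2.
have gg_ge0 : 0 <= gg by apply: sumr_ge0 => i _; apply: sqr_ge0.
have [gg0|gg_neq0] := eqVneq gg 0.
  have g0 i : P i -> g i = 0.
    move=> Pi; apply/eqP; rewrite -sqrf_eq0; apply/eqP.
    by apply: (psumr_eq0P _ gg0) => // j _; apply: sqr_ge0.
  by rewrite /a big1 ?expr0n ?gg0 ?mulr0 // => i /g0 ->; rewrite mulr0.
have expand : \sum_(i | P i) (gg * f i - a * g i) ^+ 2 = gg * (gg * ff - a ^+ 2).
  transitivity (\sum_(i | P i)
      (gg ^+ 2 * f i ^+ 2 - gg * a * 2 * (f i * g i) + a ^+ 2 * g i ^+ 2)).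
    by apply: eq_bigr => i _; ring.
  by rewrite big_split sumrB /= -!mulr_sumr -/a -/ff -/gg; ring.
have : 0 <= gg * (gg * ff - a ^+ 2).
  by rewrite -expand; apply: sumr_ge0 => i _; apply: sqr_ge0.
by rewrite pmulr_rge0 ?lt_def ?gg_neq0 // subr_ge0 mulrC.
Qed.

Section Characters.

Variables (R : realType) (n : nat) (H : {set 'rV['F_2]_n}).
Hypothesis sH : is_subgroup H.
Local Notation V := 'rV['F_2]_n.
Implicit Types (chi : V -> R[i]) (S : {set V}).
Local Open Scope complex_scope.

Lemma normc_real (x : R) : `|x%:C| = `|x|%:C.
Proof. by rewrite normc_def /= expr0n addr0 sqrtr_sqr. Qed.

Lemma character_trivial : is_character H (fun _ => 1 : R[i]).
Proof. by split=> [x _|x y _ _]; [apply: oner_neq0 | rewrite mulr1]. Qed.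

Lemma character0 chi : is_character H chi -> chi 0 = 1.
Proof.
case: sH => H0 _ [chi_neq0 chiD]; apply: (mulfI (chi_neq0 0 H0)).
by rewrite -chiD // !addr0 mulr1.
Qed.

Lemma character_sign chi h :
  is_character H chi -> h \in H -> chi h = 1 \/ chi h = -1.
Proof.
move=> cH hH; have /eqP := character0 cH; case: cH => _ chiD.
rewrite -(addvv h) chiD // -expr2 sqrf_eq1.
by case/orP => /eqP; [left | right].
Qed.

(* Characters of [H] take only the values 1 and -1 ([character_sign]), so they
   are faithfully represented by their real parts. *)
Definition charRe chi h : R := complex.Re (chi h).

Lemma charReE chi h : is_character H chi -> h \in H -> chi h = (charRe chi h)%:C.
Proof.
by move=> cH hH; rewrite /charRe; case: (character_sign cH hH) => ->; rewrite ?raddfN.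
Qed.

Lemma charRe_sign chi h :
  is_character H chi -> h \in H -> charRe chi h = 1 \/ charRe chi h = -1.
Proof.
by move=> cH hH; rewrite /charRe; case: (character_sign cH hH) => ->; [left | right].
Qed.

Lemma charReD chi h h' : is_character H chi -> h \in H -> h' \in H ->
  charRe chi (h + h') = charRe chi h * charRe chi h'.
Proof.
move=> cH hH h'H; case: (cH) => _ chiD.
by rewrite /charRe chiD // (charReE cH hH) (charReE cH h'H) -rmorphM.
Qed.

Lemma sum_charRe_eq0 chi : is_character H chi -> nontrivial_on H chi ->
  \sum_(h in H) charRe chi h = 0.
Proof.
move=> cH [h0 h0H chi_h0]; have e : charRe chi h0 = -1.
  by rewrite /charRe; case: (character_sign cH h0H) chi_h0 => ->; rewrite ?eqxx.
have : \sum_(h in H) charRe chi h = - \sum_(h in H) charRe chi h.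
  rewrite -{1}(subgroup_sum_addr _ sH h0H) -sumrN.
  by apply: eq_bigr => h hH; rewrite charReD // e mulrN1.
lra.
Qed.

Lemma sum_charRe_sqr chi : is_character H chi ->
  \sum_(h in H) charRe chi h ^+ 2 = #|H|%:R.
Proof.
move=> cH; rewrite -sum1_card natr_sum; apply: eq_bigr => h hH.
by case: (charRe_sign cH hH) => ->; rewrite ?sqrrN expr1n.
Qed.

Definition ker_char chi : {set V} := [set h | chi h == 1].

Lemma card_ker_char chi S : is_character H chi -> is_subgroup S -> S \subset H ->
  (#|S| <= 2 * #|S :&: ker_char chi|)%N.
Proof.
move=> cH sS sSH; rewrite -(cardsID (ker_char chi) S) mul2n -addnn leq_add2l.
have minus1 h : h \in S :\: ker_char chi -> chi h = -1.
  rewrite !inE => /andP[chi_h hS].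
  by case: (character_sign cH (subsetP sSH h hS)) chi_h => ->; rewrite ?eqxx.
have [h0 h0S|noS] := pickP (mem (S :\: ker_char chi)); last by rewrite (eq_card0 noS).
rewrite -(card_imset _ (addIr h0)); apply/subset_leq_card/subsetP => _ /imsetP[h hS ->].
have [hS' h0S'] : h \in S /\ h0 \in S.
  by move: hS h0S; rewrite !inE => /andP[_ ->] /andP[_ ->].
case: sS cH => _ addS [_ chiD].
rewrite !inE addS //= chiD ?(subsetP sSH) //.
by rewrite (minus1 h hS) (minus1 h0 h0S) mulrNN mulr1.
Qed.

Definition ker_chars (cs : seq (V -> R[i])) : {set V} :=
  [set h in H | all (fun c => c h == 1) cs].

Lemma ker_chars_cons c cs : ker_chars (c :: cs) = ker_chars cs :&: ker_char c.
Proof. by apply/setP => h; rewrite !inE /= -andbA [_ && (_ == 1)]andbC. Qed.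

Lemma ker_chars_sub cs : ker_chars cs \subset H.
Proof. by apply/subsetP => h; rewrite inE => /andP[]. Qed.

Lemma subgroup_ker_chars cs :
  {in cs, forall c, is_character H c} -> is_subgroup (ker_chars cs).
Proof.
move=> ccs; case: (sH) => H0 addH; split.
  by rewrite inE H0; apply/allP => c /ccs/character0 ->.
move=> x y; rewrite !inE => /andP[xH /allP cx] /andP[yH /allP cy].
rewrite addH //=; apply/allP => c cin; case: (ccs c cin) => _ -> //.
by rewrite (eqP (cx c cin)) (eqP (cy c cin)) mulr1.
Qed.

Lemma card_ker_chars cs :
  {in cs, forall c, is_character H c} -> (#|H| <= 2 ^ size cs * #|ker_chars cs|)%N.
Proof.
elim: cs => [_|c cs IH ccs].
  by rewrite mul1n subset_leq_card //; apply/subsetP => h hH; rewrite inE hH.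
have ccs' : {in cs, forall c, is_character H c}.
  by move=> d dcs; apply: ccs; rewrite inE dcs orbT.
apply: leq_trans (IH ccs') _; rewrite ker_chars_cons /= expnS (mulnC 2) -mulnA leq_mul2l.
have cc : is_character H c by apply: ccs; rewrite mem_head.
by rewrite card_ker_char ?orbT ?ker_chars_sub //; apply: subgroup_ker_chars.
Qed.

End Characters.

Section Energy.

Variables (R : realType) (n : nat) (A : {set 'rV['F_2]_n}).
Local Notation V := 'rV['F_2]_n.
Implicit Types (H K : {set V}) (x : V) (s : V -> R).
Local Open Scope complex_scope.

Definition correlation H s x : R := \sum_(h in H) ((h + x) \in A)%:R * s h.
Definition density H x : R := correlation H (fun _ => 1) x / #|H|%:R.
Definition energy H : R := \sum_x density H x ^+ 2.

Lemma card_subgroup_neq0 H : is_subgroup H -> #|H|%:R != 0 :> R.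
Proof. by move=> sH; rewrite pnatr_eq0 -lt0n card_subgroup_gt0. Qed.

Lemma sum_density_mul H K x s : is_subgroup H -> is_subgroup K -> K \subset H ->
  {in H & K, forall h k, s (h + k) = s h} ->
  \sum_(h in H) density K (h + x) * s h = correlation H s x.
Proof.
move=> sH sK sKH s_inv; have K_neq0 := card_subgroup_neq0 sK.
have e h : #|K|%:R * (density K (h + x) * s h) =
           \sum_(k in K) ((k + (h + x)) \in A)%:R * s h.
  rewrite /density /correlation mulrA mulrCA mulfV // mulr1 mulr_suml.
  by under eq_bigr do rewrite mulr1.
apply: (mulfI K_neq0); rewrite mulr_sumr (eq_bigr _ (fun h _ => e h)) exchange_big /=.
rewrite -sum1_card natr_sum mulr_suml; apply: eq_bigr => k kK.
rewrite mul1r -(subgroup_sum_addr _ sH (subsetP sKH k kK)); apply: eq_bigr => h hH.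
by rewrite s_inv // [k + _]addrC addrAC addvK.
Qed.

Lemma sum_density H K x : is_subgroup H -> is_subgroup K -> K \subset H ->
  \sum_(h in H) density K (h + x) = #|H|%:R * density H x.
Proof.
move=> sH sK sKH.
have := @sum_density_mul H K x (fun _ => 1) sH sK sKH (in2W (fun _ _ => erefl)).
under eq_bigr do rewrite mulr1.
by move=> ->; rewrite /density mulrCA mulfV ?mulr1 // card_subgroup_neq0.
Qed.

Lemma energy_increment H K : is_subgroup H -> is_subgroup K -> K \subset H ->
  \sum_x \sum_(h in H) (density K (h + x) - density H x) ^+ 2 =
  #|H|%:R * (energy K - energy H).
Proof.
move=> sH sK sKH.
have sqK : \sum_x \sum_(h in H) density K (h + x) ^+ 2 = #|H|%:R * energy K.
  rewrite exchange_big /= -sum1_card natr_sum mulr_suml; apply: eq_bigr => h _.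
  rewrite mul1r /energy [RHS](reindex_inj (addrI h)).
  by apply: eq_bigr => x _; rewrite addrC.
have crossKH : \sum_x \sum_(h in H) density K (h + x) * density H x =
               #|H|%:R * energy H.
  rewrite /energy mulr_sumr; apply: eq_bigr => x _.
  by rewrite -mulr_suml sum_density // expr2 mulrA.
have sqH : \sum_x \sum_(h in H) density H x ^+ 2 = #|H|%:R * energy H.
  by rewrite /energy mulr_sumr; apply: eq_bigr => x _; rewrite sumr_const mulr_natl.
under eq_bigr do under eq_bigr do rewrite sqrrB.
under eq_bigr do rewrite big_split /= sumrB sumrMnl.
by rewrite big_split /= sumrB sumrMnl sqK crossKH sqH mulr2n; ring.
Qed.

Lemma density_ge0 H x : 0 <= density H x.
Proof. by rewrite divr_ge0 // sumr_ge0 // => h _; rewrite mulr1. Qed.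

Lemma density_le1 H x : is_subgroup H -> density H x <= 1.
Proof.
move=> sH; rewrite ler_pdivrMr ?ltr0n ?card_subgroup_gt0 // mul1r.
rewrite -sum1_card natr_sum ler_sum // => h _.
by rewrite mulr1; case: (_ \in A).
Qed.

Lemma energy_le H : is_subgroup H -> energy H <= (2 ^ n)%:R.
Proof.
move=> sH; rewrite -card_rowF2 -sum1_card natr_sum ler_sum // => x _.
by rewrite expr2 mulr_ile1 ?density_ge0 ?density_le1.
Qed.

Lemma sqr_correlation_le H K x chi :
  is_subgroup H -> is_subgroup K -> K \subset H ->
  is_character H chi -> nontrivial_on H chi -> {in K, forall k, chi k = 1} ->
  correlation H (charRe chi) x ^+ 2 <=
  #|H|%:R * \sum_(h in H) (density K (h + x) - density H x) ^+ 2.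
Proof.
move=> sH sK sKH cH nt chiK.
have chi_inv : {in H & K, forall h k, charRe chi (h + k) = charRe chi h}.
  move=> h k hH kK.
  by rewrite (charReD sH cH hH (subsetP sKH k kK)) /charRe (chiK k kK) mulr1.
have cross : \sum_(h in H) (density K (h + x) - density H x) * charRe chi h =
             correlation H (charRe chi) x.
  under eq_bigr do rewrite mulrBl.
  by rewrite sumrB sum_density_mul // -big_distrr /= sum_charRe_eq0 // mulr0 subr0.
by rewrite -cross mulrC -(sum_charRe_sqr sH cH) sum_mul_sqr_le.
Qed.

Lemma shifted_sum_character H chi g : is_subgroup H -> is_character H chi ->
  \sum_(x in H) shifted_ind R A g x * chi x = (correlation H (charRe chi) g)%:C.
Proof.
move=> sH cH; rewrite /correlation rmorph_sum; apply: eq_bigr => h hH.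
by rewrite rmorphM rmorph_nat /shifted_ind (charReE sH cH hH).
Qed.

Lemma irregular_witness eps H g : is_subgroup H -> ~ regular_value eps A H g ->
  exists chi, [/\ is_character H chi, nontrivial_on H chi &
                  eps * #|H|%:R < `|correlation H (charRe chi) g|].
Proof.
move=> sH; apply: contra_notP => no_witness chi cH nt.
rewrite shifted_sum_character // normc_real lecR leNgt; apply/negP => lt.
by apply: no_witness; exists chi.
Qed.

Lemma norm_correlation_addl H chi h x :
  is_subgroup H -> is_character H chi -> h \in H ->
  `|correlation H (charRe chi) (h + x)| = `|correlation H (charRe chi) x|.
Proof.
move=> sH cH hH.
have -> : correlation H (charRe chi) x =
          charRe chi h * correlation H (charRe chi) (h + x).
  rewrite /correlation -(subgroup_sum_addr _ sH hH) mulr_sumr.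
  by apply: eq_bigr => h' h'H; rewrite (charReD sH cH h'H hH) addrA; ring.
by rewrite normrM; case: (charRe_sign sH cH hH) => ->; rewrite ?normrN normr1 mul1r.
Qed.

Lemma energy_gain eps H K : 0 < eps ->
  is_subgroup H -> is_subgroup K -> K \subset H -> ~ regular_subgroup eps A H ->
  (forall x, ~ regular_value eps A H x -> exists chi,
     [/\ is_character H chi, nontrivial_on H chi, {in K, forall k, chi k = 1} &
         eps * #|H|%:R < `|correlation H (charRe chi) x|]) ->
  energy H + eps ^+ 3 * (2 ^ n)%:R < energy K.
Proof.
move=> eps_gt0 sH sK sKH irregH witness.
set Irr := [set g | ~~ `[< regular_value eps A H g >]].
have Irr_gt : eps * (2 ^ n)%:R < #|Irr|%:R by rewrite ltNge; apply/negP.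
have H_gt0 : 0 < #|H|%:R :> R by rewrite ltr0n card_subgroup_gt0.
have gain_Irr x : x \in Irr ->
    eps ^+ 2 * #|H|%:R <= \sum_(h in H) (density K (h + x) - density H x) ^+ 2.
  rewrite inE => /asboolPn/witness[chi [cH nt chiK lt]].
  have := sqr_correlation_le x sH sK sKH cH nt chiK.
  move: lt; set c := correlation _ _ _; set T := \sum_(h in H) _ => lt le.
  have normc_sqr : `|c| ^+ 2 = c ^+ 2 by rewrite real_normK ?num_real.
  have epsH_ge0 : 0 <= eps * #|H|%:R by rewrite mulr_ge0 // ltW.
  nra.
have sum_gain : #|Irr|%:R * (eps ^+ 2 * #|H|%:R) <= #|H|%:R * (energy K - energy H).
  rewrite -energy_increment // (bigID (mem Irr)) /= -[X in X <= _]addr0 lerD //.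
    by rewrite mulr_natl -sumr_const ler_sum.
  by apply: sumr_ge0 => x _; apply: sumr_ge0 => h _; apply: sqr_ge0.
have gain : #|Irr|%:R * eps ^+ 2 <= energy K - energy H.
  rewrite -(ler_pM2l H_gt0); apply: le_trans sum_gain.
  by rewrite mulrCA [eps ^+ 2 * _]mulrC.
have : eps ^+ 3 * (2 ^ n)%:R < #|Irr|%:R * eps ^+ 2.
  by rewrite exprSr -mulrA mulrC ltr_pM2r ?exprn_gt0.
lra.
Qed.

End Energy.

Lemma tower_le_succ k : (tower k <= tower k.+1)%N.
Proof. by rewrite /= ltnW // ltn_expl. Qed.

Lemma tower_step c k :
  (2 * c <= tower k.+1)%N -> (2 * (c * 2 ^ c) <= tower k.+2)%N.
Proof.
rewrite [tower k.+2]/= [tower k.+1]/=; move: (tower k) => b le_c.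
have le_bc : (b + c <= 2 ^ b)%N.
  suff : (b + b <= 2 ^ b)%N by lia.
  by case: b {le_c} => // b; rewrite expnS mul2n -addnn; apply: leq_add; apply: ltn_expl.
rewrite mulnA; apply: leq_trans (leq_mul le_c (leqnn (2 ^ c))) _.
by rewrite -expnD leq_pexp2l.
Qed.

Section Refinement.

Variables (R : realType) (n : nat) (eps : R) (A : {set 'rV['F_2]_n}).
Hypothesis eps_gt0 : 0 < eps.
Local Notation V := 'rV['F_2]_n.

Lemma exists_refinement H : is_subgroup H -> ~ regular_subgroup eps A H ->
  exists K, [/\ is_subgroup K, (quot_card K <= quot_card H * 2 ^ quot_card H)%N &
                energy R A H + eps ^+ 3 * (2 ^ n)%:R < energy R A K].
Proof.
move=> sH irregH.
(* Whether [x] is regular, and which characters witness it, depends only on the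
   coset of [x] ([norm_correlation_addl]), so one character per coset suffices. *)
have pick C : exists chi : V -> R[i], is_character H chi /\
    forall x, C = coset H x -> ~ regular_value eps A H x ->
      nontrivial_on H chi /\ eps * #|H|%:R < `|correlation A H (charRe chi) x|.
  have [[x0 [-> irr_x0]]|none] :=
    pselect (exists x0, C = coset H x0 /\ ~ regular_value eps A H x0); last first.
    exists (fun _ => 1); split=> [|x eqC irr_x]; first exact: character_trivial.
    by case: none; exists x.
  have [chi [cH nt lt]] := irregular_witness sH irr_x0.
  exists chi; split=> // x eq_coset _; split=> //.
  have xx0H : x + x0 \in H by rewrite -mem_coset eq_coset coset_id.
  by rewrite -(addvK x0 x) norm_correlation_addl.
have [F F_spec] := choice pick.
pose cs := [seq F C | C <- enum (cosets H)].
have chars_cs : {in cs, forall c, is_character H c}.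
  by move=> _ /mapP[C _ ->]; case: (F_spec C).
have sK := subgroup_ker_chars sH chars_cs.
exists (ker_chars H cs); split=> //.
  have size_cs : size cs = quot_card H by rewrite size_map -cardE.
  by apply: quot_card_le; rewrite // -size_cs card_ker_chars.
apply: energy_gain (ker_chars_sub _ _) _ _ => // x irr_x.
have [cF /(_ x erefl irr_x) [nt lt]] := F_spec (coset H x).
exists (F (coset H x)); split=> // k.
have Fx_cs : F (coset H x) \in cs by apply/map_f; rewrite mem_enum imset_f.
by rewrite inE => /andP[_ /allP/(_ _ Fx_cs)/eqP].
Qed.

Lemma energy_irregular_lt H : is_subgroup H -> ~ regular_subgroup eps A H ->
  energy R A H + eps ^+ 3 * (2 ^ n)%:R < (2 ^ n)%:R.
Proof.
move=> sH irregH; have [K [sK _ gain]] := exists_refinement sH irregH.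
exact: lt_le_trans gain (energy_le R A sK).
Qed.

Lemma energy_iteration k : exists H,
  [/\ is_subgroup H, (2 * quot_card H <= tower k.+1)%N &
      regular_subgroup eps A H \/ k%:R * (eps ^+ 3 * (2 ^ n)%:R) <= energy R A H].
Proof.
elim: k => [|k [H [sH qH regH]]].
  exists [set: V]; split; first exact: subgroup_setT.
    have := quot_card_mul (@subgroup_setT n).
    rewrite cardsT card_rowF2 -{2}(mul1n (2 ^ n)%N) => /eqP.
    by rewrite eqn_pmul2r ?expn_gt0 // => /eqP ->.
  by right; rewrite mul0r; apply: sumr_ge0 => x _; apply: sqr_ge0.
have [regH_now|irregH] := pselect (regular_subgroup eps A H).
  by exists H; split; [| exact: leq_trans qH (tower_le_succ _) | left].
have [K [sK qK gain]] := exists_refinement sH irregH.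
exists K; split=> //.
  by rewrite (leq_trans _ (tower_step qH)) // leq_mul2l qK orbT.
by right; case: regH => // le; rewrite -natr1 mulrDl mul1r; lra.
Qed.

End Refinement.

Unset Implicit Arguments.

Theorem theorem2p1 (R : realType) (n : nat) (eps : R) (A : {set 'rV['F_2]_n}) :
  0 < eps -> eps < 1/2 ->
  exists H : {set 'rV['F_2]_n},
    [/\ is_subgroup H, (quot_card H <= W (eps ^- 3))%N & regular_subgroup eps A H].
Proof.
move=> eps_gt0 _.
set k := `|Num.ceil (eps ^- 3)|%N.
have k_ge : 1 <= k%:R * eps ^+ 3.
  have ceil_pos : 0 < Num.ceil (eps ^- 3) by rewrite ceil_gt0 invr_gt0 exprn_gt0.
  rewrite natr_absz gtr0_norm // -[X in X <= _](mulVf (lt0r_neq0 (exprn_gt0 3 eps_gt0))).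
  by rewrite ler_pM2r ?exprn_gt0 ?ceil_ge.
have k_gt0 : (0 < k)%N by case: k k_ge => //; rewrite mul0r ler10.
have [H [sH qH regH]] := energy_iteration A eps_gt0 k.-1.
exists H; split=> //.
  by rewrite /W -/k -(prednK k_gt0) (leq_trans _ qH) // leq_pmull.
case: regH => // le; have [//|irregH] := pselect (regular_subgroup eps A H).
have lt := energy_irregular_lt eps_gt0 sH irregH.
have N_gt0 : 0 < (2 ^ n)%:R :> R by rewrite ltr0n expn_gt0.
rewrite -[k in k%:R](prednK k_gt0) -natr1 in k_ge.
have := ler_wpM2r (ltW N_gt0) k_ge; lra.
Qed.
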